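(* Let $\theta:(0,1)\to(0,\infty)$ be $C^1$, $X(r)=\int_{1/2}^r\theta(s)^{-1/2}ds$, $\mathcal F(r)=\frac12X(r)^2$, and let $\mathcal A(r_0,r_1)$ be the minimal action $$\mathcal A(r_0,r_1)=\inf\Big\{\int_0^1\Big(\frac{\dot r^2}{2\theta(r)}+\frac{\theta(r)}2\Big(\frac{d\mathcal F}{dr}(r)\Big)^2\Big)dt:\ r\in C^1([0,1];(0,1)),\ r(0)=r_0,\ r(1)=r_1\Big\}.$$ Define $D(r_0,r_1)=\mathcal A(r_0,r_1)-\frac12\mathcal A(r_0,r_0)-\frac12\mathcal A(r_1,r_1)$. Then for all $r_0,r_1\in(0,1)$, $$D(r_0,r_1)=\frac{1}{2\sinh1}\Big(\int_{r_0}^{r_1}\frac{ds}{\sqrt{\theta(s)}}\Big)^2.$$ *)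

From Stdlib Require Import Reals.
From Coquelicot Require Import Coquelicot.
Open Scope R_scope.

Definition C1_pos_on_01 (theta : R -> R) : Prop :=
  forall s, 0 < s < 1 ->
    0 < theta s /\ ex_derive theta s /\ continuous (Derive theta) s.

Definition Xf (theta : R -> R) (r : R) : R :=
  RInt (fun s => / sqrt (theta s)) (1/2) r.

Definition Ff (theta : R -> R) (r : R) : R := (Xf theta r) ^ 2 / 2.

Definition admissible (r0 r1 : R) (r : R -> R) : Prop :=
  (forall t, 0 <= t <= 1 ->
     ex_derive r t /\ continuous (Derive r) t /\ 0 < r t < 1)
  /\ r 0 = r0 /\ r 1 = r1.

Definition action (theta : R -> R) (r : R -> R) : R :=
  RInt (fun t => (Derive r t) ^ 2 / (2 * theta (r t))
                 + theta (r t) / 2 * (Derive (Ff theta) (r t)) ^ 2) 0 1.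

Definition minAction (theta : R -> R) (r0 r1 : R) : R :=
  real (Glb_Rbar (fun v => exists r, admissible r0 r1 r /\ v = action theta r)).

Definition Dfun (theta : R -> R) (r0 r1 : R) : R :=
  minAction theta r0 r1 - minAction theta r0 r0 / 2 - minAction theta r1 r1 / 2.

(** Writing [x = X o r], the action of [r] is the oscillator energy [int_0^1 (x'^2 + x^2) / 2],
    and [X] is an increasing C^1 bijection onto its image, so the minimal action is the minimal
    energy of C^1 curves from [X r0] to [X r1].  Calibrating with the solution [y] of [y'' = y]
    having the same endpoints, [(x'^2 + x^2)/2 = ((x' - y')^2 + (x - y)^2)/2 + (y' x - y y'/2)'],
    so the energy is at least [((a^2 + b^2) cosh 1 - 2 a b) / (2 sinh 1)], with equality at
    [x = y].  In [D] the diagonal parts of this quadratic form cancel, leaving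
    [(X r1 - X r0)^2 / (2 sinh 1)]. *)

From Stdlib Require Import Reals Lra Ranalysis5.
From Coquelicot Require Import Coquelicot.
Open Scope R_scope.

Ltac solve_continuous :=
  repeat match goal with
  | |- continuous (fun _ => ?c) _ => apply continuous_const
  | |- continuous (fun t => @?f t + @?g t) _ => apply (continuous_plus f g)
  | |- continuous (fun t => @?f t - @?g t) _ => apply (continuous_minus f g)
  | |- continuous (fun t => @?f t * @?g t) _ => apply (continuous_mult f g)
  | |- continuous (fun t => @?f t / 2) _ => apply (continuous_mult f (fun _ => / 2))
  | |- continuous (fun t => @?f t ^ 2) _ => apply (continuous_mult f (fun t => f t * 1))
  end; auto.

Lemma sinh1_pos : 0 < sinh 1.
Proof. rewrite <- sinh_0. apply sinh_lt. lra. Qed.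

Lemma sinh_nonneg x : 0 <= x -> 0 <= sinh x.
Proof.
  intros [Hx | <-]; [left; rewrite <- sinh_0; now apply sinh_lt | rewrite sinh_0; lra].
Qed.

Lemma sinh_compl_add_le t : 0 <= t <= 1 -> sinh (1 - t) + sinh t <= sinh 1.
Proof.
  intros Ht. unfold sinh. rewrite !exp_Ropp.
  replace (exp 1) with (exp t * exp (1 - t)) by (rewrite <- exp_plus; f_equal; ring).
  assert (Hp := exp_ineq1_le t). assert (Hq := exp_ineq1_le (1 - t)).
  set (p := exp t) in *. set (q := exp (1 - t)) in *.
  (* twice [sinh 1 - sinh t - sinh (1 - t)] factors as [(p - 1) (q - 1) (1 - 1 / (p q))] *)
  assert (Hpq : 0 <= 1 - / (p * q)).
  { cut (/ (p * q) <= / 1); [rewrite Rinv_1; lra|]. apply Rinv_le_contravar; nra. }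
  enough (0 <= (p - 1) * (q - 1) * (1 - / (p * q))).
  { assert (p * q - / (p * q) - (q - / q) - (p - / p)
            = (p - 1) * (q - 1) * (1 - / (p * q))) by (field; lra). lra. }
  apply Rmult_le_pos; [apply Rmult_le_pos|]; lra.
Qed.

Definition sinh_interp (a b t : R) : R := (a * sinh (1 - t) + b * sinh t) / sinh 1.
Definition sinh_interp' (a b t : R) : R := (b * cosh t - a * cosh (1 - t)) / sinh 1.

Lemma is_derive_sinh_interp a b t : is_derive (sinh_interp a b) t (sinh_interp' a b t).
Proof.
  pose proof sinh1_pos. unfold sinh_interp, sinh_interp', sinh, cosh in *.
  auto_derive; [lra|]. replace (1 + - t) with (1 - t) by ring. field. lra.
Qed.

Lemma is_derive_sinh_interp' a b t : is_derive (sinh_interp' a b) t (sinh_interp a b t).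
Proof.
  pose proof sinh1_pos. unfold sinh_interp, sinh_interp', sinh, cosh in *.
  auto_derive; [lra|]. replace (1 + - t) with (1 - t) by ring. field. lra.
Qed.

Lemma sinh_interp_0 a b : sinh_interp a b 0 = a.
Proof. pose proof sinh1_pos. unfold sinh_interp. rewrite sinh_0, Rminus_0_r. field. lra. Qed.

Lemma sinh_interp_1 a b : sinh_interp a b 1 = b.
Proof. pose proof sinh1_pos. unfold sinh_interp. rewrite Rminus_diag, sinh_0. field. lra. Qed.

Lemma sinh_interp_bounds m M a b t : m < 0 < M -> m < a < M -> m < b < M -> 0 <= t <= 1 ->
  m < sinh_interp a b t < M.
Proof.
  intros Hm Ha Hb Ht. pose proof sinh1_pos as HS.
  assert (Hsum := sinh_compl_add_le t Ht).
  assert (Hal := sinh_nonneg (1 - t) ltac:(lra)).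
  assert (Hbe := sinh_nonneg t ltac:(lra)).
  assert (Hpos : 0 < sinh (1 - t) \/ 0 < sinh t).
  { rewrite <- sinh_0. destruct (Rle_lt_dec t 0); [left | right]; apply sinh_lt; lra. }
  unfold sinh_interp. set (al := sinh (1 - t)) in *. set (be := sinh t) in *.
  set (S := sinh 1) in *. clearbody al be S.
  assert (0 <= (S - al - be) * - m) by (apply Rmult_le_pos; lra).
  assert (0 <= (S - al - be) * M) by (apply Rmult_le_pos; lra).
  split; apply Rmult_lt_reg_r with S; try lra; unfold Rdiv;
    rewrite Rmult_assoc, Rinv_l, Rmult_1_r by lra;
    destruct Hpos; nra.
Qed.

Section Calibration.

Variables x x' y y' : R -> R.
Hypothesis Hx : forall t, 0 <= t <= 1 -> is_derive x t (x' t) /\ continuous x' t.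
Hypothesis Hy : forall t, is_derive y t (y' t).
Hypothesis Hy' : forall t, is_derive y' t (y t).

(* [y' x - y y' / 2] is a primitive of the energy density minus the deviation density:
   the cross terms integrate exactly because [y'' = y]. *)
Lemma energy_calibration :
  ex_RInt (fun t => ((x' t - y' t) ^ 2 + (x t - y t) ^ 2) / 2) 0 1 /\
  RInt (fun t => (x' t ^ 2 + x t ^ 2) / 2) 0 1 =
    (y' 1 * x 1 - y 1 * y' 1 / 2) - (y' 0 * x 0 - y 0 * y' 0 / 2)
    + RInt (fun t => ((x' t - y' t) ^ 2 + (x t - y t) ^ 2) / 2) 0 1.
Proof.
  set (dev := fun t => ((x' t - y' t) ^ 2 + (x t - y t) ^ 2) / 2).
  set (dG := fun t => y t * x t + y' t * x' t - (y' t ^ 2 + y t ^ 2) / 2).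
  assert (Hcont : forall t, 0 <= t <= 1 -> continuous dev t /\ continuous dG t).
  { intros t Ht. destruct (Hx t Ht) as [Hxd Hx'c].
    assert (continuous x t) by exact (ex_derive_continuous x t (ex_intro _ _ Hxd)).
    assert (continuous y t) by exact (ex_derive_continuous y t (ex_intro _ _ (Hy t))).
    assert (continuous y' t) by exact (ex_derive_continuous y' t (ex_intro _ _ (Hy' t))).
    unfold dev, dG. split; solve_continuous. }
  assert (HdG : is_RInt dG 0 1
                  (minus (y' 1 * x 1 - y 1 * y' 1 / 2) (y' 0 * x 0 - y 0 * y' 0 / 2))).
  { apply (is_RInt_derive (fun t => y' t * x t - y t * y' t / 2)); intros t Ht;
      rewrite Rmin_left, Rmax_right in Ht by lra; [|apply Hcont, Ht].
    destruct (Hx t Ht) as [Hxd _]. pose proof (Hy t). pose proof (Hy' t).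
    auto_derive; [repeat split; eexists; eauto|].
    change (fun s => x s) with x; change (fun s => y s) with y;
      change (fun s => y' s) with y'.
    rewrite (is_derive_unique _ _ _ Hxd), (is_derive_unique _ _ _ (Hy t)),
      (is_derive_unique _ _ _ (Hy' t)).
    unfold dG; cbv beta; field. }
  assert (Hdev : ex_RInt dev 0 1).
  { apply (ex_RInt_continuous (V := R_CompleteNormedModule)). intros t Ht.
    rewrite Rmin_left, Rmax_right in Ht by lra. apply Hcont, Ht. }
  split; [exact Hdev|].
  rewrite (RInt_ext (V := R_CompleteNormedModule) _ (fun t => plus (dG t) (dev t)))
    by (intros; unfold dG, dev; change plus with Rplus; simpl; field).
  rewrite (RInt_plus (V := R_CompleteNormedModule)) by first [exact (ex_intro _ _ HdG) | exact Hdev].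
  rewrite (is_RInt_unique (V := R_CompleteNormedModule) _ _ _ _ HdG). reflexivity.
Qed.

End Calibration.

Definition min_energy (a b : R) : R :=
  ((a ^ 2 + b ^ 2) * cosh 1 - 2 * a * b) / (2 * sinh 1).

Section MinimalEnergy.

Variables x x' : R -> R.
Hypothesis Hx : forall t, 0 <= t <= 1 -> is_derive x t (x' t) /\ continuous x' t.

Lemma energy_decomp :
  ex_RInt (fun t => ((x' t - sinh_interp' (x 0) (x 1) t) ^ 2
                     + (x t - sinh_interp (x 0) (x 1) t) ^ 2) / 2) 0 1 /\
  RInt (fun t => (x' t ^ 2 + x t ^ 2) / 2) 0 1 =
    min_energy (x 0) (x 1)
    + RInt (fun t => ((x' t - sinh_interp' (x 0) (x 1) t) ^ 2
                      + (x t - sinh_interp (x 0) (x 1) t) ^ 2) / 2) 0 1.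
Proof.
  destruct (energy_calibration x x' _ _ Hx (is_derive_sinh_interp (x 0) (x 1))
              (is_derive_sinh_interp' (x 0) (x 1))) as [Hex ->].
  split; [exact Hex|]. f_equal.
  rewrite sinh_interp_0, sinh_interp_1. pose proof sinh1_pos.
  unfold sinh_interp', min_energy. rewrite Rminus_diag, Rminus_0_r, cosh_0. field. lra.
Qed.

Lemma min_energy_le_energy : min_energy (x 0) (x 1) <= RInt (fun t => (x' t ^ 2 + x t ^ 2) / 2) 0 1.
Proof.
  destruct energy_decomp as [Hex ->].
  cut (0 <= RInt (fun t => ((x' t - sinh_interp' (x 0) (x 1) t) ^ 2
                            + (x t - sinh_interp (x 0) (x 1) t) ^ 2) / 2) 0 1); [lra|].
  apply RInt_ge_0; [lra | exact Hex|]. intros t _.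
  pose proof (pow2_ge_0 (x' t - sinh_interp' (x 0) (x 1) t)).
  pose proof (pow2_ge_0 (x t - sinh_interp (x 0) (x 1) t)). lra.
Qed.

Lemma energy_sinh_interp :
  (forall t, 0 <= t <= 1 ->
     x t = sinh_interp (x 0) (x 1) t /\ x' t = sinh_interp' (x 0) (x 1) t) ->
  RInt (fun t => (x' t ^ 2 + x t ^ 2) / 2) 0 1 = min_energy (x 0) (x 1).
Proof.
  intros Hopt. destruct energy_decomp as [_ ->].
  rewrite (RInt_ext (V := R_CompleteNormedModule) _ (fun _ => 0)).
  - rewrite RInt_const. unfold scal; simpl; unfold mult; simpl. ring.
  - intros t Ht. rewrite Rmin_left, Rmax_right in Ht by lra.
    destruct (Hopt t ltac:(lra)) as [-> ->]. rewrite !Rminus_diag. simpl. field.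
Qed.

End MinimalEnergy.

Lemma continuous_right_inverse (f : R -> R) c d : c < d ->
  (forall s, c <= s <= d -> continuity_pt f s) ->
  {g : R -> R | forall u, f c <= u <= f d -> c <= g u <= d /\ f (g u) = u}.
Proof.
  intros Hcd Hf.
  exists (fun u => match Rle_dec (f c) u, Rle_dec u (f d) with
                   | left h1, left h2 => proj1_sig (f_interv_is_interv f c d u Hcd (conj h1 h2) Hf)
                   | _, _ => c
                   end).
  intros u Hu. destruct (Rle_dec (f c) u) as [h1|]; [|lra].
  destruct (Rle_dec u (f d)) as [h2|]; [|lra].
  exact (proj2_sig (f_interv_is_interv f c d u Hcd (conj h1 h2) Hf)).
Qed.

Definition Xf' (theta : R -> R) (s : R) : R := / sqrt (theta s).

Lemma Xf_half theta : Xf theta (1/2) = 0.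
Proof. unfold Xf. now rewrite RInt_point. Qed.

Section Theta.

Variable theta : R -> R.
Hypothesis Htheta : C1_pos_on_01 theta.

Lemma Xf'_pos s : 0 < s < 1 -> 0 < Xf' theta s.
Proof. intros Hs. apply Rinv_0_lt_compat, sqrt_lt_R0, Htheta, Hs. Qed.

Lemma Xf'_continuous s : 0 < s < 1 -> continuous (Xf' theta) s.
Proof.
  intros Hs. destruct (Htheta s Hs) as [Hpos [Hder _]].
  apply continuous_Rinv_comp.
  - apply (continuous_comp theta sqrt); [exact (ex_derive_continuous theta s Hder)|].
    apply continuous_sqrt.
  - apply Rgt_not_eq, sqrt_lt_R0, Hpos.
Qed.

Lemma Xf'_sqr s : 0 < s < 1 -> Xf' theta s ^ 2 = / theta s.
Proof.
  intros Hs. destruct (Htheta s Hs) as [Hpos _]. unfold Xf'.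
  rewrite <- (sqrt_sqrt (theta s)) at 2 by lra.
  pose proof (sqrt_lt_R0 _ Hpos). field. lra.
Qed.

Lemma ex_RInt_Xf' u v : 0 < u < 1 -> 0 < v < 1 -> ex_RInt (Xf' theta) u v.
Proof.
  intros Hu Hv. apply (ex_RInt_continuous (V := R_CompleteNormedModule)).
  intros s Hs. apply Xf'_continuous.
  pose proof (Rmin_glb_lt u v 0). pose proof (Rmax_lub_lt u v 1). lra.
Qed.

Lemma RInt_Xf' u v : 0 < u < 1 -> 0 < v < 1 ->
  RInt (fun s => / sqrt (theta s)) u v = Xf theta v - Xf theta u.
Proof.
  intros Hu Hv. unfold Xf.
  pose proof (RInt_Chasles (V := R_CompleteNormedModule) (fun s => / sqrt (theta s)) (1/2) u v
                (ex_RInt_Xf' (1/2) u ltac:(lra) Hu) (ex_RInt_Xf' u v Hu Hv)) as Hsplit.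
  change plus with Rplus in Hsplit. lra.
Qed.

Lemma is_derive_Xf s : 0 < s < 1 -> is_derive (Xf theta) s (Xf' theta s).
Proof.
  intros Hs. apply (is_derive_RInt (V := R_CompleteNormedModule) _ _ (1/2)).
  - apply (locally_interval _ _ 0 1); try apply Hs.
    intros v Hv0 Hv1. apply (RInt_correct (V := R_CompleteNormedModule)).
    apply ex_RInt_Xf'; simpl in *; lra.
  - apply Xf'_continuous, Hs.
Qed.

Lemma Xf_lt u v : 0 < u -> u < v -> v < 1 -> Xf theta u < Xf theta v.
Proof.
  intros Hu Huv Hv. cut (0 < Xf theta v - Xf theta u); [lra|].
  rewrite <- RInt_Xf' by lra. apply RInt_gt_0; [exact Huv| |]; intros s Hs.
  - apply Xf'_pos; lra.
  - apply Xf'_continuous; lra.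
Qed.

Lemma Xf_inj u v : 0 < u < 1 -> 0 < v < 1 -> Xf theta u = Xf theta v -> u = v.
Proof.
  intros Hu Hv E. destruct (Rtotal_order u v) as [Huv | [Huv | Huv]]; [|exact Huv|].
  - pose proof (Xf_lt u v ltac:(lra) Huv ltac:(lra)). lra.
  - pose proof (Xf_lt v u ltac:(lra) Huv ltac:(lra)). lra.
Qed.

Lemma Derive_Ff s : 0 < s < 1 -> Derive (Ff theta) s = Xf theta s * Xf' theta s.
Proof.
  intros Hs. apply is_derive_unique. unfold Ff.
  pose proof (is_derive_Xf s Hs). auto_derive; [eexists; eassumption|].
  change (fun x => Xf theta x) with (Xf theta). rewrite (is_derive_unique _ _ _ H). simpl. field.
Qed.

Lemma Xf_comp_C1 r0 r1 r : admissible r0 r1 r -> forall t, 0 <= t <= 1 ->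
  is_derive (fun t => Xf theta (r t)) t (Xf' theta (r t) * Derive r t) /\
  continuous (fun t => Xf' theta (r t) * Derive r t) t.
Proof.
  intros [Hr _] t Ht. destruct (Hr t Ht) as [Hd [Hc Hb]].
  split.
  - rewrite Rmult_comm. exact (is_derive_comp _ r t _ _ (is_derive_Xf _ Hb) (Derive_correct _ _ Hd)).
  - apply (continuous_mult (fun t => Xf' theta (r t))); [|exact Hc].
    apply (continuous_comp r); [exact (ex_derive_continuous r t Hd) | apply Xf'_continuous, Hb].
Qed.

(* [theta X'^2 = 1] and [F' = X X'] turn the kinetic and potential terms into [x'^2 / 2] and
   [x^2 / 2] for [x = X o r]. *)
Lemma action_eq_energy r0 r1 r : admissible r0 r1 r ->
  action theta r =
  RInt (fun t => ((Xf' theta (r t) * Derive r t) ^ 2 + Xf theta (r t) ^ 2) / 2) 0 1.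
Proof.
  intros Hr. apply (RInt_ext (V := R_CompleteNormedModule)). intros t Ht.
  rewrite Rmin_left, Rmax_right in Ht by lra.
  match goal with |- @eq _ ?l ?r => change (@eq R l r) end.
  destruct (proj1 Hr t ltac:(lra)) as [_ [_ Hb]].
  destruct (Htheta _ Hb) as [Hpos _].
  rewrite (Derive_Ff _ Hb). pose proof (Xf'_sqr _ Hb) as Hw2.
  set (w := Xf' theta (r t)) in *. set (th := theta (r t)) in *.
  replace ((w * Derive r t) ^ 2) with (w ^ 2 * Derive r t ^ 2) by ring.
  replace ((Xf theta (r t) * w) ^ 2) with (w ^ 2 * Xf theta (r t) ^ 2) by ring.
  rewrite Hw2. field. lra.
Qed.

Lemma min_energy_le_action r0 r1 r : admissible r0 r1 r ->
  min_energy (Xf theta r0) (Xf theta r1) <= action theta r.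
Proof.
  intros Hr. rewrite (action_eq_energy r0 r1 r Hr).
  pose proof (Xf_comp_C1 r0 r1 r Hr) as HC. destruct Hr as [_ [<- <-]].
  exact (min_energy_le_energy _ _ HC).
Qed.

Lemma Xf_inverse c d : 0 < c -> c < d -> d < 1 ->
  exists g : R -> R,
    (forall u, Xf theta c <= u <= Xf theta d -> c <= g u <= d /\ Xf theta (g u) = u) /\
    (forall u, Xf theta c < u < Xf theta d -> is_derive g u (/ Xf' theta (g u))).
Proof.
  intros Hc Hcd Hd.
  assert (Hcont : forall s, c <= s <= d -> continuity_pt (Xf theta) s).
  { intros s Hs. apply continuity_pt_filterlim, (ex_derive_continuous (Xf theta)).
    eexists. apply is_derive_Xf. lra. }
  destruct (continuous_right_inverse (Xf theta) c d Hcd Hcont) as [g Hg].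
  assert (HXcd : Xf theta c < Xf theta d) by (apply Xf_lt; lra).
  assert (Hgc : g (Xf theta c) = c).
  { destruct (Hg (Xf theta c)) as [Hb HX]; [lra|]. apply Xf_inj; lra. }
  assert (Hgd : g (Xf theta d) = d).
  { destruct (Hg (Xf theta d)) as [Hb HX]; [lra|]. apply Xf_inj; lra. }
  exists g. split; [exact Hg|]. intros u Hu.
  assert (Hgu_cd : c <= g u <= d) by (apply Hg; lra).
  assert (Hgu : g (Xf theta c) <= g u <= g (Xf theta d)) by (rewrite Hgc, Hgd; exact Hgu_cd).
  assert (Prf : forall s, g (Xf theta c) <= s <= g (Xf theta d) -> derivable_pt (Xf theta) s).
  { rewrite Hgc, Hgd. intros s Hs. exists (Xf' theta s).
    apply is_derive_Reals, is_derive_Xf. lra. }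
  assert (Hder : derive_pt (Xf theta) (g u) (Prf (g u) Hgu) = Xf' theta (g u)).
  { apply derive_pt_eq_0, is_derive_Reals, is_derive_Xf. lra. }
  apply is_derive_Reals. rewrite <- Hder, <- (Rmult_1_l (/ _)).
  apply derivable_pt_lim_recip_interv; [| exact HXcd | exact Hu | |].
  - apply (continuity_pt_recip_interv (Xf theta) g c d Hcd); [| | | exact Hcont | exact Hu].
    + intros s v Hs Hsv Hv. apply Xf_lt; lra.
    + intros s Hs1 Hs2. exact (proj2 (Hg s (conj Hs1 Hs2))).
    + intros s Hs1 Hs2. exact (proj1 (Hg s (conj Hs1 Hs2))).
  - intros s Hs. exact (proj2 (Hg s Hs)).
  - rewrite Hder. apply Rgt_not_eq, Xf'_pos. lra.
Qed.

Lemma optimal_path_exists r0 r1 : 0 < r0 < 1 -> 0 < r1 < 1 ->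
  exists r, admissible r0 r1 r /\
    forall t, 0 <= t <= 1 ->
      Xf theta (r t) = sinh_interp (Xf theta r0) (Xf theta r1) t /\
      Xf' theta (r t) * Derive r t = sinh_interp' (Xf theta r0) (Xf theta r1) t.
Proof.
  intros H0 H1.
  set (y := sinh_interp (Xf theta r0) (Xf theta r1)).
  set (y' := sinh_interp' (Xf theta r0) (Xf theta r1)).
  set (c := r0 * r1 / 2).
  set (d := 1 - (1 - r0) * (1 - r1) / 2).
  assert (Hc : 0 < c /\ c < r0 /\ c < r1 /\ c < 1/2) by (unfold c; repeat split; nra).
  assert (Hd : r0 < d /\ r1 < d /\ 1/2 < d /\ d < 1) by (unfold d; repeat split; nra).
  clearbody c d.
  destruct (Xf_inverse c d) as [g [Hg Hg']]; try lra.
  assert (Hy : forall t, 0 <= t <= 1 -> Xf theta c < y t < Xf theta d).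
  { intros t Ht. apply sinh_interp_bounds; [rewrite <- (Xf_half theta); split | split | split | exact Ht];
      apply Xf_lt; lra. }
  set (r := fun t => g (y t)).
  assert (Hr : forall t, 0 <= t <= 1 -> c <= r t <= d /\ Xf theta (r t) = y t).
  { intros t Ht. apply Hg. pose proof (Hy t Ht). lra. }
  assert (Hder : forall s, Xf theta c < y s < Xf theta d ->
                   is_derive r s (y' s * / Xf' theta (r s))).
  { intros s Hs. exact (is_derive_comp g y s _ _ (Hg' _ Hs) (is_derive_sinh_interp _ _ s)). }
  assert (Hycont : forall t, continuous y t).
  { intros t. exact (ex_derive_continuous y t (ex_intro _ _ (is_derive_sinh_interp _ _ t))). }
  assert (Hloc : forall t, 0 <= t <= 1 -> locally t (fun s => Xf theta c < y s < Xf theta d)).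
  { intros t Ht. apply (Hycont t (fun z => Xf theta c < z < Xf theta d)).
    apply (locally_interval _ _ (Xf theta c) (Xf theta d)); try apply Hy, Ht. now split. }
  exists r. split; [split; [|split]|].
  - intros t Ht. destruct (Hr t Ht) as [Hrt _].
    assert (Hpos : 0 < Xf' theta (r t)) by (apply Xf'_pos; lra).
    split; [eexists; apply Hder, Hy, Ht|]. split; [|lra].
    apply (continuous_ext_loc _ (fun s => y' s * / Xf' theta (r s))).
    + apply (filter_imp (fun s => Xf theta c < y s < Xf theta d)); [|apply Hloc, Ht].
      intros s Hs. symmetry. exact (is_derive_unique _ _ _ (Hder s Hs)).
    + apply (continuous_mult y').
      * exact (ex_derive_continuous y' t (ex_intro _ _ (is_derive_sinh_interp' _ _ t))).
      * apply continuous_Rinv_comp; [|lra].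
        apply (continuous_comp r); [|apply Xf'_continuous; lra].
        apply (continuous_comp y g); [apply Hycont|].
        exact (ex_derive_continuous g _ (ex_intro _ _ (Hg' _ (Hy t Ht)))).
  - destruct (Hr 0 ltac:(lra)) as [Hr0 HX0]. apply Xf_inj; [lra | exact H0 |].
    rewrite HX0. apply sinh_interp_0.
  - destruct (Hr 1 ltac:(lra)) as [Hr1 HX1]. apply Xf_inj; [lra | exact H1 |].
    rewrite HX1. apply sinh_interp_1.
  - intros t Ht. destruct (Hr t Ht) as [Hrt ->]. split; [reflexivity|].
    rewrite (is_derive_unique _ _ _ (Hder t (Hy t Ht))).
    assert (0 < Xf' theta (r t)) by (apply Xf'_pos; lra). field. lra.
Qed.

Lemma minAction_eq r0 r1 : 0 < r0 < 1 -> 0 < r1 < 1 ->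
  minAction theta r0 r1 = min_energy (Xf theta r0) (Xf theta r1).
Proof.
  intros H0 H1. unfold minAction.
  rewrite (is_glb_Rbar_unique _ (min_energy (Xf theta r0) (Xf theta r1))); [reflexivity|].
  split.
  - intros v [r [Hr ->]]. exact (min_energy_le_action r0 r1 r Hr).
  - intros l Hl. destruct (optimal_path_exists r0 r1 H0 H1) as [r [Hr Hopt]].
    apply Hl. exists r. split; [exact Hr|].
    rewrite (action_eq_energy r0 r1 r Hr).
    pose proof (Xf_comp_C1 r0 r1 r Hr) as HC. destruct Hr as [_ [<- <-]].
    symmetry. exact (energy_sinh_interp _ _ HC Hopt).
Qed.

End Theta.

Theorem mainTheorem13 (theta : R -> R) (Htheta : C1_pos_on_01 theta)
  (r0 r1 : R) (H0 : 0 < r0 < 1) (H1 : 0 < r1 < 1) :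
  Dfun theta r0 r1 =
  / (2 * sinh 1) * (RInt (fun s => / sqrt (theta s)) r0 r1) ^ 2.
Proof.
  unfold Dfun. rewrite !minAction_eq, RInt_Xf' by assumption.
  unfold min_energy. pose proof sinh1_pos. field. lra.
Qed.
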